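(* Let $d\ge2$ and let $\mathcal T_d=(t_{i-j})_{0\le i,j\le d-1}$ be a complex Toeplitz matrix which is invertible, and assume that $\mathcal T_{d-1}=(t_{i-j})_{0\le i,j\le d-2}$ is singular. For $\gamma,\delta\in\mathbb C$ let $$\mathcal T_{d+1}=\begin{pmatrix}\mathcal T_d & (\gamma,t_{-d+1},\dots,t_{-1})^T\\ (\delta,t_{d-1},\dots,t_1)& t_0\end{pmatrix}.$$ Let $\mathbf V_-=(0,t_{-d+1},\dots,t_{-1})^T$, $\mathbf V_+=(0,t_{d-1},\dots,t_1)^T$ and $\mathbf e_0=(1,0,\dots,0)^T$ in $\mathbb C^d$. Then $$\det(\mathcal T_{d+1})=-\det(\mathcal T_d)\big(\gamma\,\mathbf V_+^T\mathcal T_d^{-1}\mathbf e_0+\delta\,\mathbf e_0^T\mathcal T_d^{-1}\mathbf V_-+\mathbf V_+^T\mathcal T_d^{-1}\mathbf V_--t_0\big),$$ and neither $\mathbf V_+^T\mathcal T_d^{-1}\mathbf e_0$ nor $\mathbf e_0^T\mathcal T_d^{-1}\mathbf V_-$ is zero. *)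

From HB Require Import structures.
From mathcomp Require Import all_boot all_order all_algebra.
From mathcomp Require Import complex.
From mathcomp Require Import reals.
Set Implicit Arguments. Unset Strict Implicit. Unset Printing Implicit Defensive.
Import Order.TTheory GRing.Theory Num.Theory.
Local Open Scope ring_scope.

Definition toeplitz (C : pzRingType) (t : int -> C) (n : nat) : 'M[C]_n :=
  \matrix_(i < n, j < n) t (i%:Z - j%:Z).

(* The (d+1)x(d+1) bordered matrix T_{d+1} of the paper: the Toeplitz matrix
   of size d+1 except that the top-right corner is gamma and the bottom-left
   corner is delta. *)
Definition bordered (C : pzRingType) (t : int -> C) (d : nat) (g dl : C)
  : 'M[C]_d.+1 :=
  \matrix_(i < d.+1, j < d.+1)
    if (i == 0%N :> nat) && (j == d :> nat) then g
    else if (i == d :> nat) && (j == 0%N :> nat) then dl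
    else t (i%:Z - j%:Z).

Definition Vminus (C : pzRingType) (t : int -> C) (d : nat) : 'cV[C]_d :=
  \col_(i < d) if (i == 0%N :> nat) then 0 else t (i%:Z - d%:Z).

Definition Vplus (C : pzRingType) (t : int -> C) (d : nat) : 'cV[C]_d :=
  \col_(i < d) if (i == 0%N :> nat) then 0 else t (d%:Z - i%:Z).

Definition e0 (C : pzRingType) (d : nat) : 'cV[C]_d :=
  \col_(i < d) if (i == 0%N :> nat) then 1 else 0.

From HB Require Import structures.
From mathcomp Require Import all_boot all_order all_algebra.
From mathcomp Require Import complex reals ring.
Import Order.TTheory GRing.Theory Num.Theory.
Local Open Scope ring_scope.

(* Let T = T_d.  Since T_{d-1} is the (0,0)-minor of T and is singular,
   (T^-1)_00 = 0.  T_{d+1} is T bordered by the column gamma e0 + V_-, the row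
   (delta e0 + V_+)^T and the corner t_0, so the Schur complement gives
   det T_{d+1} = det T (t_0 - (delta e0 + V_+)^T T^-1 (gamma e0 + V_-)); in the
   bilinear expansion the gamma delta term is (T^-1)_00 = 0.
   For a <> 0: x = T^-1 e0 has x_0 = 0, and by the Toeplitz structure T maps
   the shifted vector (x_1, ..., x_{d-1}, 0) to (0, ..., 0, V_+^T x), its
   first d-1 entries being the last d-1 entries of T x = e0.  So a = V_+^T x = 0
   would give a nonzero vector in the kernel of T.  The claim b <> 0 is the
   same statement for the transposed Toeplitz matrix, of symbol k |-> t (-k). *)

Lemma det_block_mx_unit (R : comUnitRingType) n (A : 'M[R]_n) (c : 'cV_n)
    (r : 'rV_n) (s : 'M_1) :
  A \in unitmx -> \det (block_mx A c r s) = \det A * (s - r *m invmx A *m c) 0 0.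
Proof.
move=> uA.
have -> : block_mx A c r s =
    block_mx 1%:M 0 (r *m invmx A) 1%:M *m block_mx A c 0 (s - r *m invmx A *m c).
  rewrite mulmx_block !mul1mx !mul0mx !addr0 mulmxKV //.
  by rewrite addrC subrK.
by rewrite det_mulmx det_lblock det_ublock !det1 det_mx11 !mul1r.
Qed.

Lemma det_castmx (R : comPzRingType) n m (eq_nm : n = m) (A : 'M[R]_n) :
  \det (castmx (eq_nm, eq_nm) A) = \det A.
Proof. by case: m / eq_nm; rewrite castmx_id. Qed.

Definition shift_up {R : pzRingType} {n} (x : 'cV[R]_n.+1) : 'cV[R]_n.+1 :=
  \col_i if unlift ord_max i is Some j then x (lift ord0 j) 0 else 0.

Section Toeplitz.
Variable R : pzRingType.
Implicit Types t : int -> R.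

Lemma tr_toeplitz t n : (toeplitz t n)^T = toeplitz (t \o -%R) n.
Proof. by apply/matrixP => i j; rewrite !mxE /= opprB. Qed.

Lemma Vplus_comp_opp t n : Vplus (t \o -%R) n = Vminus t n.
Proof. by apply/matrixP => i j; rewrite !mxE /= opprB. Qed.

Lemma row'0_col'0_toeplitz t n : row' 0 (col' 0 (toeplitz t n.+1)) = toeplitz t n.
Proof. by apply/matrixP => i j; rewrite !mxE !lift0 subzSS. Qed.

Lemma mulmx_e0 m n (A : 'M[R]_(m, n.+1)) i : (A *m e0 R n.+1) i 0 = A i 0.
Proof.
rewrite mxE (bigD1_ord ord0) //= !mxE mulr1 big1 ?addr0 // => j _.
by rewrite !mxE mulr0.
Qed.

Lemma tr_e0_mulmx m n (A : 'M[R]_(n.+1, m)) j : ((e0 R n.+1)^T *m A) 0 j = A 0 j.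
Proof.
rewrite mxE (bigD1_ord ord0) //= !mxE mul1r big1 ?addr0 // => k _.
by rewrite !mxE mul0r.
Qed.

Lemma bordered_block_mx t n g dl :
  bordered t n.+1 g dl = castmx (addn1 n.+1, addn1 n.+1)
    (block_mx (toeplitz t n.+1) (g *: e0 R n.+1 + Vminus t n.+1)
       (dl *: e0 R n.+1 + Vplus t n.+1)^T (t 0)%:M).
Proof.
apply/matrixP => i j; rewrite castmxE /=.
case: (split_ordP (cast_ord (esym (addn1 n.+1)) i)) => i' Ei;
  case: (split_ordP (cast_ord (esym (addn1 n.+1)) j)) => j' Ej;
  rewrite Ei Ej /bordered mxE; move: (congr1 val Ei) (congr1 val Ej) => /= -> ->.
- by rewrite block_mxEul !mxE !(ltn_eqF (ltn_ord _)) !andbF.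
- rewrite block_mxEur !mxE ord1 addn0 eqxx (ltn_eqF (ltn_ord i')) andbT.
  by case: eqP => _; rewrite ?mulr1 ?mulr0 ?addr0 ?add0r.
- rewrite block_mxEdl !mxE ord1 addn0 eqxx /=.
  by case: eqP => _; rewrite ?mulr1 ?mulr0 ?addr0 ?add0r.
- by rewrite block_mxEdr !mxE !ord1 addn0 /= eqxx subrr.
Qed.

Lemma toeplitz_mul_shift_up_lift t n (x : 'cV[R]_n.+1) (i : 'I_n) :
  x 0 0 = 0 ->
  (toeplitz t n.+1 *m shift_up x) (lift ord_max i) 0
    = (toeplitz t n.+1 *m x) (lift ord0 i) 0.
Proof.
move=> x0; rewrite !mxE (bigD1_ord ord_max) // (bigD1_ord ord0) //=.
rewrite !mxE unlift_none x0 !mulr0 !add0r; apply: eq_bigr => k _.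
by rewrite !mxE liftK !lift_max !lift0 subzSS.
Qed.

Lemma toeplitz_mul_shift_up_max t n (x : 'cV[R]_n.+1) :
  (toeplitz t n.+1 *m shift_up x) ord_max 0 = ((Vplus t n.+1)^T *m x) 0 0.
Proof.
rewrite !mxE (bigD1_ord ord_max) // (bigD1_ord ord0) //=.
rewrite !mxE unlift_none /= !mulr0 mul0r !add0r; apply: eq_bigr => k _.
by rewrite !mxE liftK lift_max lift0 subzSS.
Qed.

End Toeplitz.

Section SingularLeadingMinor.
Variables (F : comUnitRingType) (t : int -> F) (n : nat).
Hypotheses (unit_T : toeplitz t n.+1 \in unitmx)
  (singular_T' : \det (toeplitz t n) = 0).

Lemma invmx_toeplitz00 : invmx (toeplitz t n.+1) 0 0 = 0.
Proof.
by rewrite /invmx unit_T !mxE /cofactor row'0_col'0_toeplitz singular_T' !mulr0.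
Qed.

Lemma Vplus_invmx_e0_neq0 :
  ((Vplus t n.+1)^T *m invmx (toeplitz t n.+1) *m e0 F n.+1) 0 0 != 0.
Proof.
set T := toeplitz t n.+1; rewrite -mulmxA; set x := invmx T *m e0 F n.+1.
have Tx : T *m x = e0 F n.+1 by rewrite mulKVmx.
have x0 : x 0 0 = 0 by rewrite mulmx_e0 invmx_toeplitz00.
clearbody x.
apply/eqP => Vx0.
have Tz : T *m shift_up x = 0.
  apply/matrixP => i j; rewrite ord1 [RHS]mxE.
  case: (unliftP ord_max i) => [k -> | ->].
  - by rewrite toeplitz_mul_shift_up_lift // Tx mxE.
  - by rewrite toeplitz_mul_shift_up_max.
have z0 : shift_up x = 0 by rewrite -(mulKmx unit_T (shift_up x)) Tz mulmx0.
have x_eq0 : x = 0.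
  apply/matrixP => i j; rewrite ord1 [RHS]mxE.
  case: (unliftP ord0 i) => [k -> | ->] //.
  have := congr1 (fun z : 'cV[F]_n.+1 => z (lift ord_max k) 0) z0.
  by rewrite !mxE liftK.
have := congr1 (fun y : 'cV[F]_n.+1 => y 0 0) Tx; rewrite x_eq0 mulmx0 !mxE /=.
by move/esym/eqP; rewrite oner_eq0.
Qed.

End SingularLeadingMinor.

Lemma e0_invmx_Vminus_neq0 (F : comUnitRingType) (t : int -> F) n :
  toeplitz t n.+1 \in unitmx -> \det (toeplitz t n) = 0 ->
  ((e0 F n.+1)^T *m invmx (toeplitz t n.+1) *m Vminus t n.+1) 0 0 != 0.
Proof.
move=> unit_T singular_T'.
have := @Vplus_invmx_e0_neq0 F (t \o -%R) n.
rewrite -!tr_toeplitz unitmx_tr det_tr Vplus_comp_opp => /(_ unit_T singular_T').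
by rewrite -trmx_inv -[e0 F n.+1]trmxK -!trmx_mul mxE trmxK mulmxA.
Qed.

Lemma bilinear_form_expand (R : comPzRingType) n (A : 'M[R]_n)
    (u1 u2 v1 v2 : 'cV[R]_n) (k1 k2 : R) :
  ((k1 *: u1 + u2)^T *m A *m (k2 *: v1 + v2)) 0 0 =
  k1 * k2 * (u1^T *m A *m v1) 0 0 + k1 * (u1^T *m A *m v2) 0 0
  + k2 * (u2^T *m A *m v1) 0 0 + (u2^T *m A *m v2) 0 0.
Proof.
rewrite [(_ + _)^T]linearD /= [(k1 *: _)^T]linearZ /= !mulmxDl !mulmxDr.
rewrite -!scalemxAl -!scalemxAr scalerA.
by rewrite ![fun_of_matrix (_ + _) _ _]mxE ![fun_of_matrix (_ *: _) _ _]mxE !addrA.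
Qed.

Lemma det_bordered (F : comUnitRingType) (t : int -> F) n g dl :
  toeplitz t n.+1 \in unitmx ->
  \det (bordered t n.+1 g dl) = \det (toeplitz t n.+1) * (t 0 -
    ((dl *: e0 F n.+1 + Vplus t n.+1)^T *m invmx (toeplitz t n.+1)
       *m (g *: e0 F n.+1 + Vminus t n.+1)) 0 0).
Proof.
move=> unit_T.
rewrite bordered_block_mx det_castmx det_block_mx_unit //.
by rewrite [fun_of_matrix (_ - _) _ _]mxE mxE mulr1n [fun_of_matrix (- _) _ _]mxE.
Qed.

Theorem proposition14 (R : realType) (d : nat) (t : int -> R[i]) (g dl : R[i]) :
  (2 <= d)%N ->
  toeplitz t d \in unitmx ->
  \det (toeplitz t d.-1) = 0 ->
  let Td := toeplitz t d in
  let a := ((Vplus t d)^T *m invmx Td *m e0 _ d) ord0 ord0 in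
  let b := ((e0 _ d)^T *m invmx Td *m Vminus t d) ord0 ord0 in
  let c := ((Vplus t d)^T *m invmx Td *m Vminus t d) ord0 ord0 in
  \det (bordered t d g dl) = - \det Td * (g * a + dl * b + c - t 0)
  /\ a != 0 /\ b != 0.
Proof.
case: d => [|n] // _ unit_T singular_T' Td a b c.
split; last by split; [exact: Vplus_invmx_e0_neq0 | exact: e0_invmx_Vminus_neq0].
rewrite det_bordered // bilinear_form_expand mulmx_e0 tr_e0_mulmx.
rewrite invmx_toeplitz00 // -/a -/b -/c -/Td.
by ring.
Qed.
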